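(* Let $a_1,\dots,a_n>0$ and let $\tilde{x}\in\mathbb{R}^n$ satisfy $\sum_{j=1}^n a_j\tilde{x}_j\neq0$. Then $\pi_{\mathrm{PoS}}(\tilde{x})$ is the unique optimal solution of $$\min_{v\in\Delta_n}\ \big\|v-P^F(\tilde{x})\big\|_{\rightleftharpoons}.$$
   Context: $\Delta_n=\{v\in\mathbb{R}^n: v\ge0,\ \sum_i v_i=1\}$ is the probability simplex. For $y\in\mathbb{R}^n$ with $\sum_j a_jy_j\ne0$, the allocation formula is $P^F(y)_i=\frac{a_iy_i}{\sum_{j=1}^n a_jy_j}$, $i\in[n]$. For $v\in\mathbb{R}^n$, $\|v\|_{\rightleftharpoons}=\max_i v_i-\min_i v_i$. The projection-onto-simplex mechanism is $\pi_{\mathrm{PoS}}(\tilde{x})=\arg\min_{v\in\Delta_n}\|v-P^F(\tilde{x})\|_2$ (Euclidean projection of $P^F(\tilde{x})$ onto $\Delta_n$). *)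

From mathcomp Require Import all_boot all_order all_algebra.
From mathcomp Require Import reals.
Set Implicit Arguments. Unset Strict Implicit. Unset Printing Implicit Defensive.
Import Order.TTheory GRing.Theory Num.Theory.
Local Open Scope ring_scope.

Section Defs.
Variable R : realType.
Variable n : nat.

Definition in_simplex (v : 'I_n -> R) : Prop :=
  (forall i, 0 <= v i) /\ \sum_(i < n) v i = 1.

Definition PF (a y : 'I_n -> R) : 'I_n -> R :=
  fun i => a i * y i / \sum_(j < n) a j * y j.

Definition norm2 (v : 'I_n -> R) : R := Num.sqrt (\sum_(i < n) v i ^+ 2).

(* max_i v_i and min_i v_i (the value for n = 0 is irrelevant) *)
Definition vmax (v : 'I_n -> R) : R :=
  let s := [seq v i | i <- enum 'I_n] in foldr Num.max (head 0 s) s.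
Definition vmin (v : 'I_n -> R) : R :=
  let s := [seq v i | i <- enum 'I_n] in foldr Num.min (head 0 s) s.

Definition rnorm (v : 'I_n -> R) : R := vmax v - vmin v.

Definition vsub (v w : 'I_n -> R) : 'I_n -> R := fun i => v i - w i.

Definition is_simplex_proj (p w : 'I_n -> R) : Prop :=
  in_simplex w /\ forall v, in_simplex v -> norm2 (vsub w p) <= norm2 (vsub v p).

End Defs.

From mathcomp Require Import all_boot all_order all_algebra.
From mathcomp Require Import reals.
From mathcomp Require Import ring lra.
From Stdlib Require Import FunctionalExtensionality.
Import Order.TTheory GRing.Theory Num.Theory.
Local Open Scope ring_scope.
Set Implicit Arguments. Unset Strict Implicit.

(* The Euclidean projection of a point p of the hyperplane {sum = 1} onto the
   simplex is the soft thresholding w_i = max (p_i - t, 0), where the level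
   t >= 0 makes w sum to 1.  The difference d = w - p satisfies d_i = -t on the
   support of w and d_i = -p_i >= -t off it, so min d = -t.  For any other v in
   the simplex, v - p vanishes in sum, hence has max >= 0 and max >= -p_i for
   every i, so max (v - p) >= max d.  And min (v - p) >= -t would force v to
   agree with w on the support and to vanish off it, i.e. v = w. *)

Lemma foldr_mem (T : eqType) (op : T -> T -> T) x0 (s : seq T) :
  (forall x y, op x y \in [:: x; y]) -> foldr op x0 s \in x0 :: s.
Proof.
move=> opxy; elim: s => [|x s IHs] /=; first exact: mem_head.
rewrite !inE; move: (opxy x (foldr op x0 s)); rewrite !inE.
case/orP=> /eqP ->; first by rewrite eqxx orbT.
by move: IHs; rewrite inE => /orP[] ->; rewrite ?orbT.
Qed.

Lemma foldr_head_mem (T : eqType) (op : T -> T -> T) (x0 : T) (s : seq T) :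
  (forall x y, op x y \in [:: x; y]) -> s != [::] -> foldr op (head x0 s) s \in s.
Proof.
move=> opxy; case: s => // x s _.
by move: (foldr_mem x (x :: s) opxy); rewrite inE => /orP[/eqP ->|]; rewrite ?mem_head.
Qed.

Lemma foldr_max_ge d (T : orderType d) (s : seq T) x0 y :
  y \in s -> (y <= foldr Order.max x0 s)%O.
Proof.
elim: s => //= x s IHs; rewrite inE le_max => /orP[/eqP ->|/IHs ->].
  by rewrite lexx.
by rewrite orbT.
Qed.

Lemma foldr_min_le d (T : orderType d) (s : seq T) x0 y :
  y \in s -> (foldr Order.min x0 s <= y)%O.
Proof.
elim: s => //= x s IHs; rewrite inE ge_min => /orP[/eqP ->|/IHs ->].
  by rewrite lexx.
by rewrite orbT.
Qed.

Section Extrema.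
Variables (R : realType) (n : nat).
Implicit Types u : 'I_n -> R.

Lemma vmax_ge u i : u i <= vmax u.
Proof. by apply: foldr_max_ge; rewrite map_f ?mem_enum. Qed.

Lemma vmin_le u i : vmin u <= u i.
Proof. by apply: foldr_min_le; rewrite map_f ?mem_enum. Qed.

Lemma map_enum_ord_neq0 u (i0 : 'I_n) : [seq u i | i <- enum 'I_n] != [::].
Proof. by apply/eqP=> /(congr1 (fun s => u i0 \in s)); rewrite map_f ?mem_enum. Qed.

Lemma vmax_mem u (i0 : 'I_n) : exists i, vmax u = u i.
Proof.
have : vmax u \in [seq u i | i <- enum 'I_n].
  apply: (foldr_head_mem 0 _ (map_enum_ord_neq0 u i0)) => x y.
  by rewrite !inE; case: leP => _; rewrite eqxx ?orbT.
by case/mapP=> i _ ->; exists i.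
Qed.

Lemma vmin_mem u (i0 : 'I_n) : exists i, vmin u = u i.
Proof.
have : vmin u \in [seq u i | i <- enum 'I_n].
  apply: (foldr_head_mem 0 _ (map_enum_ord_neq0 u i0)) => x y.
  by rewrite !inE; case: leP => _; rewrite eqxx ?orbT.
by case/mapP=> i _ ->; exists i.
Qed.

Lemma vmax_ge0_sum0 u (i0 : 'I_n) : \sum_i u i = 0 -> 0 <= vmax u.
Proof.
move=> u0; have : \sum_i u i <= \sum_(i < n) vmax u by apply: ler_sum => i _; exact: vmax_ge.
by rewrite u0 sumr_const card_ord pmulrn_lge0 // (leq_ltn_trans _ (ltn_ord i0)).
Qed.

End Extrema.

Section Projection.
Variables (R : realType) (n : nat) (p w : 'I_n -> R).
Hypothesis w_simplex : in_simplex w.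
Hypothesis w_variational :
  forall v, in_simplex v -> 0 <= \sum_i (v i - w i) * (w i - p i).

Lemma sumr_sqr_ge0 (u : 'I_n -> R) : 0 <= \sum_i u i ^+ 2.
Proof. by apply: sumr_ge0 => i _; rewrite sqr_ge0. Qed.

Lemma sqdist_pythagoras_le v : in_simplex v ->
  \sum_i (w i - p i) ^+ 2 + \sum_i (v i - w i) ^+ 2 <= \sum_i (v i - p i) ^+ 2.
Proof.
move=> /w_variational vw.
have -> : \sum_i (v i - p i) ^+ 2 = \sum_i (w i - p i) ^+ 2 + \sum_i (v i - w i) ^+ 2
          + 2 * \sum_i (v i - w i) * (w i - p i).
  by rewrite mulr_sumr -!big_split /=; apply: eq_bigr => i _; ring.
lra.
Qed.

Lemma variational_simplex_proj : is_simplex_proj p w.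
Proof.
split=> // v /sqdist_pythagoras_le vw.
rewrite /norm2 /vsub ler_sqrt ?sumr_sqr_ge0 //.
by have := sumr_sqr_ge0 (fun i => v i - w i); lra.
Qed.

Lemma simplex_proj_unique w' : is_simplex_proj p w' -> w' = w.
Proof.
case=> /sqdist_pythagoras_le w'w /(_ w w_simplex).
rewrite /norm2 /vsub ler_sqrt ?sumr_sqr_ge0 // => ww'.
have dist0 : \sum_i (w' i - w i) ^+ 2 = 0.
  by apply/eqP; rewrite eq_le sumr_sqr_ge0 andbT; lra.
apply: functional_extensionality => i.
have /eqP := psumr_eq0P (fun i _ => sqr_ge0 (w' i - w i)) dist0 (i := i) isT.
by rewrite sqrf_eq0 subr_eq0 => /eqP.
Qed.

End Projection.

Definition soft_thresh (R : realType) (n : nat) (p : 'I_n -> R) (t : R) :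
  'I_n -> R := fun i => Num.max (p i - t) 0.

Section ThresholdLevel.
Variables (R : realType) (n : nat) (p : 'I_n -> R).
Hypothesis p_sum1 : \sum_i p i = 1.

Lemma sum_soft_thresh t : \sum_i soft_thresh p t i = \sum_(i | t < p i) (p i - t).
Proof.
rewrite [RHS]big_mkcond /=; apply: eq_bigr => i _; rewrite /soft_thresh.
case: ltP => [/ltW|] ti.
  by apply/max_idPl; rewrite subr_ge0.
by apply/max_idPr; rewrite subr_le0.
Qed.

(* The threshold is the largest of these averages over nonempty A. *)
Definition level_of (A : {set 'I_n}) : R := (\sum_(i in A) p i - 1) / #|A|%:R.

Lemma sum_sub_level_of A t : A != set0 ->
  \sum_(i in A) (p i - t) = 1 + (level_of A - t) * #|A|%:R.
Proof.
rewrite -card_gt0 -(ltr0n R) => /lt0r_neq0 A0.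
by rewrite mulrBl [level_of A * _]divfK // sumrB sumr_const -mulr_natr; ring.
Qed.

Lemma exists_soft_thresh (i0 : 'I_n) :
  exists2 t, 0 <= t & \sum_i soft_thresh p t i = 1.
Proof.
have [A A0 Amax] : exists2 A, A != set0 & forall B, B != set0 -> level_of B <= level_of A.
  have i0_set0 : [set i0] != set0 by apply/set0Pn; exists i0; rewrite inE.
  by case: (arg_maxP level_of (P := fun A => A != set0) i0_set0) => A A0 Amax; exists A.
exists (level_of A).
  have T0 : [set: 'I_n] != set0 by apply/set0Pn; exists i0.
  apply: le_trans (Amax _ T0); rewrite /level_of.
  under eq_bigl do rewrite inE.
  by rewrite p_sum1 subrr mul0r.
apply/eqP; rewrite eq_le sum_soft_thresh; apply/andP; split.
  set S := [set i | level_of A < p i].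
  have -> : \sum_(i | level_of A < p i) (p i - level_of A) = \sum_(i in S) (p i - level_of A).
    by apply: eq_bigl => i; rewrite inE.
  have [->|S0] := eqVneq S set0; first by rewrite big_set0 ler01.
  rewrite sum_sub_level_of // -lerBrDl subrr.
  by rewrite mulr_le0_ge0 ?subr_le0 ?Amax.
have -> : 1 = \sum_(i in A) (p i - level_of A).
  by rewrite sum_sub_level_of // subrr mul0r addr0.
rewrite -sum_soft_thresh [X in _ <= X](bigID (mem A)) /= -[X in X <= _]addr0.
apply: lerD; first by apply: ler_sum => i _; rewrite le_max lexx.
by apply: sumr_ge0 => i _; rewrite le_max lexx orbT.
Qed.

End ThresholdLevel.

Section SoftThreshold.
Variables (R : realType) (n : nat) (p : 'I_n -> R) (t : R).
Hypotheses (p_sum1 : \sum_i p i = 1) (t_ge0 : 0 <= t).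
Hypothesis w_sum1 : \sum_i soft_thresh p t i = 1.
Local Notation w := (soft_thresh p t).

Lemma soft_thresh_simplex : in_simplex w.
Proof. by split=> // i; rewrite le_max lexx orbT. Qed.

Lemma soft_thresh_variational v :
  in_simplex v -> 0 <= \sum_i (v i - w i) * (w i - p i).
Proof.
case=> v_ge0 v_sum1.
have le_i i : - t * (v i - w i) <= (v i - w i) * (w i - p i).
  rewrite /soft_thresh; case: (leP (p i - t) 0) => pi.
    by have := v_ge0 i; nra.
  lra.
apply: le_trans (ler_sum _ (fun i _ => le_i i)).
by rewrite -mulr_sumr sumrB v_sum1 w_sum1 subrr mulr0.
Qed.

Lemma support_sum1 : \sum_(i | t < p i) (p i - t) = 1.
Proof. by rewrite -sum_soft_thresh. Qed.

Lemma exists_above_level : exists i, t < p i.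
Proof.
case: (pickP (fun i => t < p i)) => [i ti|none]; first by exists i.
by move: support_sum1; rewrite big_pred0 // => /eqP; rewrite eq_sym oner_eq0.
Qed.

Lemma soft_thresh_ge i : - t <= vsub w p i.
Proof. by rewrite /vsub /soft_thresh; case: (leP (p i - t) 0) => ?; lra. Qed.

(* If v - p >= -t everywhere, then the nonnegative slacks v_i - p_i + t on the
   support and v_i off it sum to zero, so they all vanish. *)
Lemma simplex_eq_soft_thresh v :
  in_simplex v -> - t <= vmin (vsub v p) -> v = w.
Proof.
case=> v_ge0 v_sum1 vmin_ge.
have slack_ge0 i : 0 <= v i - p i + t.
  by have := vmin_le (vsub v p) i; rewrite /vsub; lra.
have split1 : \sum_(i | t < p i) v i + \sum_(i | ~~ (t < p i)) v i = 1.
  by rewrite -v_sum1 [in RHS](bigID (fun i => t < p i)).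
have slack_sum : \sum_(i | t < p i) (v i - p i + t) = \sum_(i | t < p i) v i - 1.
  by rewrite -support_sum1 -sumrB; apply: eq_bigr => i _; ring.
have off_ge0 : 0 <= \sum_(i | ~~ (t < p i)) v i by apply: sumr_ge0.
have on_ge0 : 0 <= \sum_(i | t < p i) (v i - p i + t) by apply: sumr_ge0.
have on0 : \sum_(i | t < p i) (v i - p i + t) = 0 by lra.
have off0 : \sum_(i | ~~ (t < p i)) v i = 0 by lra.
apply: functional_extensionality => i; rewrite /soft_thresh.
case: (ltP t (p i)) => ti.
  have := psumr_eq0P (fun i _ => slack_ge0 i) on0 ti.
  by rewrite (max_idPl _) ?subr_ge0 ?ltW //; lra.
rewrite (psumr_eq0P (fun i _ => v_ge0 i) off0) ?ltNge ?ti //.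
by apply/esym/max_idPr; rewrite subr_le0.
Qed.

Lemma vmin_simplex_le v : in_simplex v -> vmin (vsub v p) <= - t.
Proof.
move=> vS; rewrite leNgt; apply/negP => vmin_gt.
have vw := simplex_eq_soft_thresh vS (ltW vmin_gt).
have [i ti] := exists_above_level.
move: vmin_gt (vmin_le (vsub v p) i); rewrite /vsub vw /soft_thresh.
by case: (leP (p i - t) 0) => ?; lra.
Qed.

Lemma vmin_soft_thresh : vmin (vsub w p) = - t.
Proof.
have [i0 _] := exists_above_level.
apply/eqP; rewrite eq_le (vmin_simplex_le soft_thresh_simplex) /=.
by have [j ->] := vmin_mem (vsub w p) i0; exact: soft_thresh_ge.
Qed.

Lemma vmax_soft_thresh_le v : in_simplex v -> vmax (vsub w p) <= vmax (vsub v p).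
Proof.
case=> v_ge0 v_sum1; have [i0 _] := exists_above_level.
have vmax_ge0 : 0 <= vmax (vsub v p).
  by apply: (vmax_ge0_sum0 i0); rewrite /vsub sumrB v_sum1 p_sum1 subrr.
have [i ->] := vmax_mem (vsub w p) i0.
rewrite {1}/vsub /soft_thresh; case: (leP (p i - t) 0) => _.
  by rewrite sub0r (le_trans _ (vmax_ge _ i)) // ler_wpDl.
by rewrite addrAC subrr add0r (le_trans _ vmax_ge0) // oppr_le0.
Qed.

Lemma soft_thresh_rnorm_min v : in_simplex v -> rnorm (vsub w p) <= rnorm (vsub v p).
Proof.
move=> vS; rewrite /rnorm vmin_soft_thresh.
by have := vmax_soft_thresh_le vS; have := vmin_simplex_le vS; lra.
Qed.

Lemma soft_thresh_rnorm_unique v :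
  in_simplex v -> rnorm (vsub v p) <= rnorm (vsub w p) -> v = w.
Proof.
move=> vS; rewrite /rnorm vmin_soft_thresh => le_w.
by apply: simplex_eq_soft_thresh => //; have := vmax_soft_thresh_le vS; lra.
Qed.

End SoftThreshold.

Theorem theorem2 (R : realType) (n : nat) (a x : 'I_n -> R)
  (ha : forall i, 0 < a i)
  (hx : \sum_(j < n) a j * x j != 0) :
  (exists w, is_simplex_proj (PF a x) w) /\
  forall w, is_simplex_proj (PF a x) w ->
    [/\ in_simplex w,
        forall v, in_simplex v -> rnorm (vsub w (PF a x)) <= rnorm (vsub v (PF a x)) &
        forall v, in_simplex v ->
          rnorm (vsub v (PF a x)) <= rnorm (vsub w (PF a x)) -> v = w].
Proof.
have p_sum1 : \sum_i PF a x i = 1 by rewrite /PF -mulr_suml divff.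
have [i0 _] : exists i0 : 'I_n, True.
  by case: n a x hx {ha p_sum1} => [|m] a' x'; [rewrite big_ord0 eqxx | exists ord0].
have [t t_ge0 w_sum1] := exists_soft_thresh p_sum1 i0.
have w_simplex := soft_thresh_simplex w_sum1.
have w_variational := soft_thresh_variational w_sum1.
split=> [|w' /(simplex_proj_unique w_simplex w_variational) ->].
  by exists (soft_thresh (PF a x) t); exact: variational_simplex_proj.
split=> // v; first exact: soft_thresh_rnorm_min.
exact: soft_thresh_rnorm_unique.
Qed.
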